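(* Let $D,p\ge1$ be integers, let $r_1,\dots,r_p,s_1,\dots,s_p,t_1,\dots,t_p\ge0$ be integers, and let $0=d_0<d_1<\cdots<d_p=D$ be integers. Put $A_j=d_j-d_{j-1}$ for $j=1,\dots,p$. For every complex $z$ with $|z|>1$, $$\int_{[0,1]^D}\prod_{j=1}^p\frac{\prod_{\ell=d_{j-1}+1}^{d_j}x_\ell^{r_j}(1-x_\ell)^{s_j}}{(z-x_1\cdots x_{d_j})^{t_j+1}}\,\mathrm{d}x_1\cdots\mathrm{d}x_D = z^{-(t_1+\cdots+t_p+p-1)}\prod_{j=1}^p\frac{s_j!^{A_j}}{t_j!}\sum_{k_1\ge\cdots\ge k_p\ge1}z^{-k_1}\prod_{j=1}^p\frac{(k_j-k_{j+1}+1)_{t_j}}{(k_j+r_j)_{s_j+1}^{A_j}},$$ where $k_{p+1}=1$. The series on the right has depth $p$ and weight $D$.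
   Context: $(\alpha)_m=\alpha(\alpha+1)\cdots(\alpha+m-1)$ is the Pochhammer symbol, with $(\alpha)_0=1$. *)

From Stdlib Require Import Reals List Factorial.
From Coquelicot Require Import Coquelicot.
Open Scope C_scope.

Fixpoint poch (a m : nat) : nat :=
  match m with
  | O => 1%nat
  | S m' => (poch a m' * (a + m'))%nat
  end.

Definition csum (lo n : nat) (f : nat -> C) : C :=
  fold_right Cplus 0 (map f (seq lo n)).

Definition cprod (lo n : nat) (f : nat -> C) : C :=
  fold_right Cmult 1 (map f (seq lo n)).

Definition upd (x : nat -> R) (i : nat) (y : R) : nat -> R :=
  fun l => if Nat.eqb l i then y else x l.

(* Iterated integral over [0,1]^n of F in the coordinates x_1, ..., x_n
   (coordinates are indexed 1..n; other coordinates are set to 0):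
   iint n F = int_0^1 ... int_0^1 F(x_1,...,x_n) dx_n ... dx_1. *)
Fixpoint iint (n : nat) (F : (nat -> R) -> C) : C :=
  match n with
  | O => F (fun _ => 0%R)
  | S m => iint m (fun x => @RInt C_R_CompleteNormedModule (fun y => F (upd x (S m) y)) 0%R 1%R)
  end.

Definition xprod (x : nat -> R) (m : nat) : C :=
  cprod 1 m (fun l => RtoC (x l)).

Definition integrand (p : nat) (d r s t : nat -> nat) (z : C) (x : nat -> R) : C :=
  cprod 1 p (fun j =>
    cprod (S (d (j - 1)%nat)) (d j - d (j - 1))%nat
      (fun l => Cpow (RtoC (x l)) (r j) * Cpow (RtoC (1 - x l)%R) (s j))
    / Cpow (z - xprod x (d j)) (S (t j))).

Definition sfactor (d r s t : nat -> nat) (j kj kj1 : nat) : C :=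
  RtoC (INR (poch (kj - kj1 + 1) (t j)))
  / Cpow (RtoC (INR (poch (kj + r j) (S (s j))))) (d j - d (j - 1))%nat.

(* tail_sum m j k = sum over k = k_j >= k_{j+1} >= ... >= k_{j+m} >= 1 of
   prod_{i=j}^{j+m} sfactor i k_i k_{i+1}, with k_{j+m+1} = 1. *)
Fixpoint tail_sum (d r s t : nat -> nat) (m j k : nat) : C :=
  match m with
  | O => sfactor d r s t j k 1
  | S m' => csum 1 k (fun k' => sfactor d r s t j k k' * tail_sum d r s t m' (S j) k')
  end.

(* Term of index k1 of the series (k1 >= 1) : the sum over
   k1 >= k2 >= ... >= kp >= 1 of z^{-k1} prod_{j=1}^p sfactor j k_j k_{j+1}, k_{p+1} = 1.
   The series sum_{k_1 >= ... >= k_p >= 1} is summed by grouping according to k_1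
   (it converges absolutely for |z| > 1). *)
Definition series_term (p : nat) (d r s t : nat -> nat) (z : C) (n : nat) : C :=
  let k1 := S n in
  / Cpow z k1 * tail_sum d r s t (p - 1) 1 k1.

(* Put w = 1/z.  Since (1 - u)^{-(t+1)} = (1/t!) sum_{n >= 0} (n+1)_t u^n, every factor
   (z - x_1...x_{d_j})^{-(t_j+1)} is a power series in w x_1...x_{d_j}.  Multiplying the p expansions
   and collecting powers of w writes the integrand as sum_{k_1} w^{k_1} times a sum over
   k_1 >= ... >= k_p >= 1 of prod_j (k_j - k_{j+1} + 1)_{t_j} times, for each variable x_l of the
   j-th block, the monomial x_l^{k_j - 1 + r_j} (1 - x_l)^{s_j}.  Such a monomial integrates to the
   Beta value s_j!/(k_j + r_j)_{s_j+1}, which produces exactly the depth-p series.  Summation and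
   integration commute because on the cube the coefficients are dominated by those at x = 1,
   and |w| < 1. *)

From Stdlib Require Import Reals List Factorial Lia Lra.
From Coquelicot Require Import Coquelicot.
Open Scope C_scope.

(* Coquelicot's canonical structures often hide the carrier of an equation from [ring]. *)
Ltac ring_at T := match goal with |- ?a = ?b => change (@eq T a b); ring end.

(** * Finite sums and products *)

Lemma cprod_0 lo f : cprod lo 0 f = 1.
Proof. reflexivity. Qed.

Lemma cprod_Sl lo n f : cprod lo (S n) f = f lo * cprod (S lo) n f.
Proof. reflexivity. Qed.

Lemma csum_0 lo f : csum lo 0 f = 0.
Proof. reflexivity. Qed.

Lemma csum_Sl lo n f : csum lo (S n) f = f lo + csum (S lo) n f.
Proof. reflexivity. Qed.

Lemma cprod_add a : forall lo b f, cprod lo (a + b) f = cprod lo a f * cprod (lo + a) b f.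
Proof.
  induction a as [|a IH]; intros lo b f.
  - rewrite cprod_0, Nat.add_0_r. simpl. ring.
  - rewrite Nat.add_succ_l, !cprod_Sl, IH.
    replace (S lo + a)%nat with (lo + S a)%nat by lia. ring.
Qed.

Lemma csum_add a : forall lo b f, csum lo (a + b) f = csum lo a f + csum (lo + a) b f.
Proof.
  induction a as [|a IH]; intros lo b f.
  - rewrite csum_0, Nat.add_0_r. simpl. ring.
  - rewrite Nat.add_succ_l, !csum_Sl, IH.
    replace (S lo + a)%nat with (lo + S a)%nat by lia. ring.
Qed.

Lemma cprod_Sr lo n f : cprod lo (S n) f = cprod lo n f * f (lo + n)%nat.
Proof.
  replace (S n) with (n + 1)%nat by lia. rewrite cprod_add, cprod_Sl, cprod_0. ring.
Qed.

Lemma csum_Sr lo n f : csum lo (S n) f = csum lo n f + f (lo + n)%nat.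
Proof.
  replace (S n) with (n + 1)%nat by lia. rewrite csum_add, csum_Sl, csum_0. ring.
Qed.

Lemma cprod_ext n : forall lo f g, (forall i, (lo <= i < lo + n)%nat -> f i = g i) ->
  cprod lo n f = cprod lo n g.
Proof.
  induction n as [|n IH]; intros lo f g H; [reflexivity|].
  rewrite !cprod_Sl, (H lo) by lia.
  rewrite (IH (S lo) f g); [reflexivity|intros; apply H; lia].
Qed.

Lemma csum_ext n : forall lo f g, (forall i, (lo <= i < lo + n)%nat -> f i = g i) ->
  csum lo n f = csum lo n g.
Proof.
  induction n as [|n IH]; intros lo f g H; [reflexivity|].
  rewrite !csum_Sl, (H lo) by lia.
  rewrite (IH (S lo) f g); [reflexivity|intros; apply H; lia].
Qed.

Lemma cprod_mult n : forall lo f g,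
  cprod lo n (fun i => f i * g i) = cprod lo n f * cprod lo n g.
Proof.
  induction n as [|n IH]; intros; [rewrite !cprod_0; ring|rewrite !cprod_Sl, IH; ring].
Qed.

Lemma cprod_pow n : forall lo f k, cprod lo n (fun i => f i ^ k) = cprod lo n f ^ k.
Proof.
  induction n as [|n IH]; intros; [now rewrite !cprod_0, Cpow_1_l|].
  now rewrite !cprod_Sl, IH, Cpow_mult_l.
Qed.

Lemma cprod_const n : forall lo c, cprod lo n (fun _ => c) = c ^ n.
Proof. induction n as [|n IH]; intros; [reflexivity|now rewrite cprod_Sl, IH]. Qed.

Lemma cprod_pow_S (w : C) (t : nat -> nat) n : forall lo,
  cprod lo n (fun j => w ^ S (t j)) = w ^ (fold_right Nat.add 0%nat (map t (seq lo n)) + n).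
Proof.
  induction n as [|n IH]; intros lo; [reflexivity|].
  rewrite cprod_Sl, IH, <- Cpow_add_r. cbn [seq map fold_right]. f_equal. lia.
Qed.

Lemma csum_scal n : forall lo c f, csum lo n (fun i => c * f i) = c * csum lo n f.
Proof.
  induction n as [|n IH]; intros; [rewrite !csum_0; ring|rewrite !csum_Sl, IH; ring].
Qed.

Lemma csum_plus n : forall lo f g,
  csum lo n (fun i => f i + g i) = csum lo n f + csum lo n g.
Proof.
  induction n as [|n IH]; intros; [rewrite !csum_0; ring|rewrite !csum_Sl, IH; ring].
Qed.

Lemma cprod_split a b lo (f g : nat -> C) :
  cprod lo (a + b) (fun l => if Nat.ltb l (lo + a) then f l else g l) =
  cprod lo a f * cprod (lo + a) b g.
Proof.
  rewrite cprod_add. f_equal; apply cprod_ext; intros i Hi;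
    destruct (Nat.ltb_spec i (lo + a)); lia || reflexivity.
Qed.

Lemma cprod_neq_0 n : forall lo (f : nat -> C),
  (forall i, (lo <= i < lo + n)%nat -> f i <> 0) -> cprod lo n f <> 0.
Proof.
  induction n as [|n IH]; intros lo f H; [apply C1_nz|].
  rewrite cprod_Sl. apply Cmult_neq_0; [apply H; lia|apply IH; intros; apply H; lia].
Qed.

Lemma Cinv_neq_0 (a : C) : a <> 0 -> / a <> 0.
Proof. intros H E. apply C1_nz. rewrite <- (Cinv_r a H), E. ring. Qed.

Lemma neq_0_of_Cmod_gt_1 (z : C) : (1 < Cmod z)%R -> z <> 0.
Proof. intros Hz E. rewrite E, Cmod_0 in Hz. lra. Qed.

Lemma Cmod_inv_lt_1 (z : C) : (1 < Cmod z)%R -> (Cmod (/ z) < 1)%R.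
Proof.
  intros Hz. rewrite Cmod_inv by now apply neq_0_of_Cmod_gt_1.
  rewrite <- Rinv_1. apply Rinv_lt_contravar; lra.
Qed.

Lemma Cmod_cprod_le_1 n : forall lo f, (forall i, (Cmod (f i) <= 1)%R) ->
  (Cmod (cprod lo n f) <= 1)%R.
Proof.
  induction n as [|n IH]; intros lo f H; [rewrite cprod_0, Cmod_1; lra|].
  rewrite cprod_Sl, Cmod_mult.
  pose proof (IH (S lo) f H). pose proof (H lo).
  pose proof (Cmod_ge_0 (f lo)). pose proof (Cmod_ge_0 (cprod (S lo) n f)). nra.
Qed.

Lemma pow_le_1 (x : R) n : (0 <= x <= 1)%R -> (x ^ n <= 1)%R.
Proof. intros H. rewrite <- (pow1 n). now apply pow_incr. Qed.

Lemma Cmod_mult_le (a b : C) (r : R) : (Cmod a <= 1)%R -> (Cmod b <= r)%R -> (Cmod (a * b) <= r)%R.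
Proof.
  intros Ha Hb. rewrite Cmod_mult. pose proof (Cmod_ge_0 a). pose proof (Cmod_ge_0 b). nra.
Qed.

Lemma Cmod_csum_le_Re n : forall lo f g, (forall i, (Cmod (f i) <= Re (g i))%R) ->
  (Cmod (csum lo n f) <= Re (csum lo n g))%R.
Proof.
  induction n as [|n IH]; intros lo f g H.
  - rewrite !csum_0, Cmod_0. simpl. lra.
  - rewrite !csum_Sl, re_plus. eapply Rle_trans; [apply Cmod_triangle|].
    pose proof (H lo). pose proof (IH (S lo) f g H). lra.
Qed.

Lemma Cmod_csum_le_sum_f_R0 n : forall lo f,
  (Cmod (csum lo (S n) f) <= sum_f_R0 (fun k => Cmod (f (lo + k)%nat)) n)%R.
Proof.
  induction n as [|n IH]; intros lo f.
  - rewrite csum_Sl, csum_0, Cplus_0_r. simpl. rewrite Nat.add_0_r. lra.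
  - rewrite csum_Sr. simpl sum_f_R0.
    eapply Rle_trans; [apply Cmod_triangle|]. pose proof (IH lo f). lra.
Qed.

(** * Pochhammer symbols and the Beta integral *)

Lemma poch_Sl m : forall n, poch n (S m) = (n * poch (S n) m)%nat.
Proof.
  induction m as [|m IH]; intros n; [simpl; lia|].
  change (poch n (S (S m))) with (poch n (S m) * (n + S m))%nat.
  rewrite IH. simpl. lia.
Qed.

Lemma poch_pos m : forall n, (0 < n)%nat -> (0 < poch n m)%nat.
Proof. induction m as [|m IH]; intros n Hn; simpl; [lia|specialize (IH n Hn); nia]. Qed.

Lemma poch_pascal n t : poch (S n) (S t) = (poch n (S t) + S t * poch (S n) t)%nat.
Proof.
  rewrite (poch_Sl t n). change (poch (S n) (S t)) with (poch (S n) t * (S n + t))%nat. lia.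
Qed.

Lemma RtoC_INR_neq_0 n : (0 < n)%nat -> RtoC (INR n) <> 0.
Proof. intros Hn E. apply RtoC_inj, (INR_eq _ 0) in E. lia. Qed.

Lemma norm_C_R (b : C) : @norm _ C_R_NormedModule b = Cmod b.
Proof.
  destruct b as [u v]. unfold norm, Cmod; simpl.
  unfold prod_norm, abs, norm; simpl. unfold abs; simpl.
  rewrite !Rmult_1_r, <- !Rabs_mult, !Rabs_right by nra. reflexivity.
Qed.

Lemma is_RInt_Cmult_l (f : R -> C) (a If : C) (lo hi : R) :
  @is_RInt C_R_NormedModule f lo hi If ->
  @is_RInt C_R_NormedModule (fun y => a * f y) lo hi (a * If).
Proof.
  intros H.
  pose proof (@is_RInt_fct_extend_fst R_NormedModule R_NormedModule f lo hi If H) as H1.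
  pose proof (@is_RInt_fct_extend_snd R_NormedModule R_NormedModule f lo hi If H) as H2.
  destruct a as [a1 a2], If as [i1 i2].
  pose proof (is_RInt_minus _ _ lo hi _ _
                (is_RInt_scal _ lo hi a1 _ H1) (is_RInt_scal _ lo hi a2 _ H2)) as E1.
  pose proof (is_RInt_plus _ _ lo hi _ _
                (is_RInt_scal _ lo hi a1 _ H2) (is_RInt_scal _ lo hi a2 _ H1)) as E2.
  replace ((a1, a2) * (i1, i2))
    with (minus (scal a1 i1) (scal a2 i2), plus (scal a1 i2) (scal a2 i1)).
  - exact (@is_RInt_fct_extend_pair R_NormedModule R_NormedModule
             (fun y => (a1, a2) * f y) lo hi _ _ E1 E2).
  - unfold Cmult, minus, plus, scal, opp; simpl. unfold mult; simpl. f_equal; ring.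
Qed.

Lemma is_RInt_RtoC (f : R -> R) lo hi (If : R) :
  is_RInt f lo hi If -> @is_RInt C_R_NormedModule (fun y => RtoC (f y)) lo hi (RtoC If).
Proof.
  intros H. apply (@is_RInt_fct_extend_pair R_NormedModule R_NormedModule); [exact H|].
  pose proof (@is_RInt_const R_NormedModule lo hi 0%R) as H0.
  match type of H0 with is_RInt _ _ _ ?v => replace v with 0%R in H0 end; [exact H0|].
  unfold scal; simpl; unfold mult; simpl; ring.
Qed.

Lemma is_RInt_beta b : forall a,
  is_RInt (fun y => y ^ a * (1 - y) ^ b)%R 0 1 (INR (fact b) / INR (poch (S a) (S b)))%R.
Proof.
  induction b as [|b IH]; intros a.
  - replace (INR (fact 0) / INR (poch (S a) 1))%R
      with (1 ^ S a / INR (S a) - 0 ^ S a / INR (S a))%R.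
    + eapply is_RInt_ext, is_RInt_pow. intros y _. simpl. ring.
    + rewrite pow1, pow_i by lia. cbn [poch fact]. rewrite Nat.add_0_r, Nat.mul_1_l.
      match goal with |- ?u = ?v => change (@eq R u v) end.
      change (INR 1) with 1%R. field. apply not_0_INR. lia.
  - match goal with |- is_RInt _ _ _ ?v =>
      replace v with (minus (INR (fact b) / INR (poch (S a) (S b)))
                            (INR (fact b) / INR (poch (S (S a)) (S b))))%R end.
    + eapply is_RInt_ext, (@is_RInt_minus R_NormedModule); [|apply IH|apply IH].
      intros y _. unfold minus, plus, opp; simpl. ring.
    + assert (E1 : INR (poch (S a) (S (S b))) = (INR (poch (S a) (S b)) * (INR a + INR b + 2))%R).
      { change (poch (S a) (S (S b))) with (poch (S a) (S b) * (S a + S b))%nat.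
        rewrite mult_INR, plus_INR, !S_INR. ring. }
      assert (E2 : INR (poch (S a) (S (S b))) = ((INR a + 1) * INR (poch (S (S a)) (S b)))%R).
      { rewrite poch_Sl, mult_INR, S_INR. reflexivity. }
      pose proof (lt_0_INR _ (poch_pos (S b) (S a) ltac:(lia))).
      pose proof (lt_0_INR _ (poch_pos (S b) (S (S a)) ltac:(lia))).
      pose proof (pos_INR a). pose proof (pos_INR b).
      replace (INR (poch (S (S a)) (S b)))
        with (INR (poch (S a) (S b)) * (INR a + INR b + 2) / (INR a + 1))%R
        by (rewrite <- E1, E2; field; lra).
      rewrite E1. change (fact (S b)) with (S b * fact b)%nat. rewrite mult_INR, S_INR.
      set (P1 := INR (poch (S a) (S b))) in *.
      unfold minus, plus, opp; simpl. field. repeat split; lra.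
Qed.

(** * Iterated integrals over the unit cube *)

Notation RInt01 f := (@RInt C_R_CompleteNormedModule f 0%R 1%R).

Definition in_unit_cube (x : nat -> R) : Prop := forall l, (0 <= x l <= 1)%R.

Lemma upd_same x i y : upd x i y i = y.
Proof. unfold upd. now rewrite Nat.eqb_refl. Qed.

Lemma upd_other x i y l : l <> i -> upd x i y l = x l.
Proof. intros H. unfold upd. now destruct (Nat.eqb_spec l i). Qed.

Lemma in_unit_cube_upd x i y :
  in_unit_cube x -> (0 <= y <= 1)%R -> in_unit_cube (upd x i y).
Proof. intros Hx Hy l. unfold upd. destruct (Nat.eqb l i); [lra|apply Hx]. Qed.

Lemma Rmin_Rmax_01 y : (Rmin 0 1 < y < Rmax 0 1)%R -> (0 <= y <= 1)%R.
Proof. rewrite Rmin_left, Rmax_right by lra. lra. Qed.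

Lemma iint_S m F : iint (S m) F = iint m (fun x => RInt01 (fun y => F (upd x (S m) y))).
Proof. reflexivity. Qed.

Fixpoint ex_iint (n : nat) (F : (nat -> R) -> C) : Prop :=
  match n with
  | O => True
  | S m => (forall x, in_unit_cube x -> @ex_RInt C_R_NormedModule (fun y => F (upd x (S m) y)) 0 1)
           /\ ex_iint m (fun x => RInt01 (fun y => F (upd x (S m) y)))
  end.

Definition is_iint (n : nat) (F : (nat -> R) -> C) (I : C) : Prop := ex_iint n F /\ iint n F = I.

Lemma iint_ext n : forall F G, (forall x, in_unit_cube x -> F x = G x) -> iint n F = iint n G.
Proof.
  induction n as [|n IH]; intros F G H.
  - apply H. intros l. lra.
  - apply IH. intros x Hx. apply (@RInt_ext C_R_CompleteNormedModule).
    intros y Hy. apply H, in_unit_cube_upd, Rmin_Rmax_01; assumption.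
Qed.

Lemma ex_iint_ext n : forall F G,
  (forall x, in_unit_cube x -> F x = G x) -> ex_iint n F -> ex_iint n G.
Proof.
  induction n as [|n IH]; intros F G H HF; [exact I|]. destruct HF as [HF1 HF2]. split.
  - intros x Hx. eapply (@ex_RInt_ext C_R_NormedModule); [|exact (HF1 x Hx)].
    intros y Hy. apply H, in_unit_cube_upd, Rmin_Rmax_01; assumption.
  - eapply IH; [|exact HF2]. intros x Hx. apply (@RInt_ext C_R_CompleteNormedModule).
    intros y Hy. apply H, in_unit_cube_upd, Rmin_Rmax_01; assumption.
Qed.

Lemma is_iint_ext n F G I :
  (forall x, in_unit_cube x -> F x = G x) -> is_iint n F I -> is_iint n G I.
Proof.
  intros H [HF HI]. split; [exact (ex_iint_ext n F G H HF)|].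
  rewrite <- HI. symmetry. exact (iint_ext n F G H).
Qed.

Lemma is_iint_zero n : is_iint n (fun _ => 0) 0.
Proof.
  assert (E : RInt01 (fun _ : R => RtoC 0) = RtoC 0).
  { rewrite RInt_const. exact (@scal_zero_r R_Ring C_R_ModuleSpace _). }
  induction n as [|n [IH1 IH2]]; [split; [exact I|reflexivity]|]. split.
  - split; [intros; apply ex_RInt_const|].
    eapply ex_iint_ext; [|exact IH1]. intros x _. now rewrite E.
  - rewrite iint_S, <- IH2 at 1. apply iint_ext. intros x _. exact E.
Qed.

Lemma is_iint_plus n : forall F G IF IG, is_iint n F IF -> is_iint n G IG ->
  is_iint n (fun x => F x + G x) (IF + IG).
Proof.
  induction n as [|n IH]; intros F G IF IG [HF EF] [HG EG].
  - split; [exact I|]. simpl in *. now subst.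
  - destruct HF as [F1 F2], HG as [G1 G2].
    destruct (IH _ _ IF IG (conj F2 EF) (conj G2 EG)) as [H1 H2].
    assert (E : forall x, in_unit_cube x ->
      RInt01 (fun y => F (upd x (S n) y)) + RInt01 (fun y => G (upd x (S n) y)) =
      RInt01 (fun y => F (upd x (S n) y) + G (upd x (S n) y))).
    { intros x Hx. symmetry. apply (@RInt_plus C_R_CompleteNormedModule); auto. }
    split; [split|].
    + intros x Hx. apply (@ex_RInt_plus C_R_NormedModule); auto.
    + exact (ex_iint_ext n _ _ E H1).
    + rewrite iint_S, <- H2. symmetry. exact (iint_ext n _ _ E).
Qed.

Lemma is_iint_csum n K : forall lo (F : nat -> (nat -> R) -> C) (I : nat -> C),
  (forall k, (lo <= k < lo + K)%nat -> is_iint n (F k) (I k)) ->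
  is_iint n (fun x => csum lo K (fun k => F k x)) (csum lo K I).
Proof.
  induction K as [|K IH]; intros lo F I H; [apply is_iint_zero|].
  apply (is_iint_plus n (F lo)); [apply H; lia|]. apply IH. intros k Hk. apply H. lia.
Qed.

Lemma is_iint_cprod n : forall (c : C) (phi : nat -> R -> C) (Iv : nat -> C),
  (forall l, (1 <= l <= n)%nat -> @is_RInt C_R_NormedModule (phi l) 0 1 (Iv l)) ->
  is_iint n (fun x => c * cprod 1 n (fun l => phi l (x l))) (c * cprod 1 n Iv).
Proof.
  induction n as [|n IH]; intros c phi Iv HI; [split; [exact I|reflexivity]|].
  assert (E : forall x, in_unit_cube x -> @is_RInt C_R_NormedModule
    (fun y => c * cprod 1 (S n) (fun l => phi l (upd x (S n) y l))) 0 1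
    (c * Iv (S n) * cprod 1 n (fun l => phi l (x l)))).
  { intros x Hx.
    apply (@is_RInt_ext C_R_NormedModule
             (fun y => (c * cprod 1 n (fun l => phi l (x l))) * phi (S n) y)).
    - intros y Hy. rewrite cprod_Sr. simpl (1 + n)%nat. rewrite upd_same.
      rewrite (cprod_ext n 1 (fun l => phi l (upd x (S n) y l)) (fun l => phi l (x l)))
        by (intros; rewrite upd_other by lia; reflexivity).
      ring_at C.
    - replace (c * Iv (S n) * _) with (c * cprod 1 n (fun l => phi l (x l)) * Iv (S n)) by ring.
      apply is_RInt_Cmult_l, HI. lia. }
  destruct (IH (c * Iv (S n)) phi Iv) as [H1 H2]; [intros; apply HI; lia|].
  split; [split|].
  - intros x Hx. eexists. exact (E x Hx).
  - eapply ex_iint_ext; [|exact H1]. intros x Hx. symmetry.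
    exact (@is_RInt_unique C_R_CompleteNormedModule _ _ _ _ (E x Hx)).
  - rewrite iint_S, (iint_ext n _ (fun x => c * Iv (S n) * cprod 1 n (fun l => phi l (x l)))), H2.
    + rewrite cprod_Sr. simpl (1 + n)%nat. ring.
    + intros x Hx. exact (@is_RInt_unique C_R_CompleteNormedModule _ _ _ _ (E x Hx)).
Qed.

Definition separable (n : nat) (G : (nat -> R) -> C) (I : C) : Prop :=
  exists (c : C) (phi : nat -> R -> C) (Iv : nat -> C),
    (forall l, (1 <= l <= n)%nat -> @is_RInt C_R_NormedModule (phi l) 0 1 (Iv l)) /\
    (forall x, G x = c * cprod 1 n (fun l => phi l (x l))) /\ I = c * cprod 1 n Iv.

Lemma is_iint_separable n G I : separable n G I -> is_iint n G I.
Proof.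
  intros (c & phi & Iv & HI & HG & ->).
  eapply is_iint_ext, is_iint_cprod, HI. intros x _. symmetry. apply HG.
Qed.

Lemma separable_scal n G I (a : C) : separable n G I -> separable n (fun x => a * G x) (a * I).
Proof.
  intros (c & phi & Iv & HI & HG & ->). exists (a * c), phi, Iv.
  repeat split; [exact HI| |ring]. intros x. rewrite HG. ring.
Qed.

Lemma separable_const (c : C) : separable 0 (fun _ => c) c.
Proof.
  exists c, (fun _ _ => 0), (fun _ => 0).
  repeat split; [intros; lia| |]; intros; rewrite cprod_0; ring.
Qed.

(** * Term-by-term integration *)

Lemma is_series_C_unique (a : nat -> C) (l1 l2 : C) : is_series a l1 -> is_series a l2 -> l1 = l2.
Proof. apply (@filterlim_locally_unique _ C_AbsRing C_NormedModule _ _ (sum_n a)). Qed.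

Lemma Cmod_series_le (b : nat -> C) (B : C) (M : nat -> R) (SM : R) :
  is_series b B -> (forall k, (Cmod (b k) <= M k)%R) -> is_series M SM -> (Cmod B <= SM)%R.
Proof.
  intros Hb HM HS.
  assert (L : is_lim_seq (fun n => norm (sum_n b n)) (norm B)).
  { apply (filterlim_comp _ _ _ (sum_n b) norm eventually (locally B)); [exact Hb|].
    apply (@filterlim_norm C_AbsRing C_NormedModule). }
  assert (LM : is_lim_seq (sum_n M) SM) by exact HS.
  apply (is_lim_seq_le _ _ _ _
           (fun n => Rle_trans _ _ _ (@norm_sum_n_m C_AbsRing C_NormedModule _ _ _)
                       (sum_n_m_le _ _ _ _ (fun k => HM k))) L LM).
Qed.

Lemma Cmod_series_tail_le (b : nat -> C) (B : C) (M : nat -> R) (SM : R) N :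
  is_series b B -> (forall k, (Cmod (b k) <= M k)%R) -> is_series M SM ->
  (Cmod (B - sum_n b N) <= SM - sum_n M N)%R.
Proof.
  intros Hb HM HS.
  apply (Cmod_series_le (fun k => b (S N + k)%nat) _ (fun k => M (S N + k)%nat)).
  - apply is_series_incr_n; [lia|]. simpl pred.
    match goal with |- is_series _ ?q => replace q with B; [exact Hb|] end.
    unfold plus; simpl. match goal with |- _ = Cplus (_ - ?u) ?v => change v with u end. ring.
  - intros k. apply HM.
  - apply is_series_incr_n; [lia|]. simpl pred.
    match goal with |- is_series _ ?q => replace q with SM; [exact HS|] end.
    unfold plus; simpl. match goal with |- _ = Rplus (_ - ?u) ?v => change v with u end. ring.
Qed.

Lemma uniform_cvg_series {T : Type} (g : nat -> T -> C) (G : T -> C) (M : nat -> R) :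
  (forall k y, (Cmod (g k y) <= M k)%R) -> ex_series M ->
  (forall y, is_series (fun k => g k y) (G y)) ->
  filterlim (fun N y => @sum_n C_AbelianMonoid (fun k => g k y) N) eventually
    (@locally (fct_UniformSpace T C_R_CompleteNormedModule) G).
Proof.
  intros HM [SM HS] HG.
  apply (proj2 (filterlim_locally (U := fct_UniformSpace T C_R_CompleteNormedModule) _ G)).
  intros eps.
  assert (L : is_lim_seq (sum_n M) SM) by exact HS.
  apply is_lim_seq_spec in L. destruct (L eps) as [N0 HN0].
  exists N0. intros N HN y. apply (@norm_compat1 R_AbsRing C_R_NormedModule).
  rewrite norm_C_R. specialize (HN0 N HN). apply Rabs_def2 in HN0.
  pose proof (Cmod_series_tail_le _ _ M SM N (HG y) (fun k => HM k y) HS) as Htail.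
  change (minus _ _) with (@sum_n C_AbelianMonoid (fun k => g k y) N - G y).
  rewrite <- Cmod_opp, Copp_minus_distr. lra.
Qed.

Definition clamp01 (y : R) : R := Rmax 0 (Rmin 1 y).

Lemma clamp01_in y : (0 <= clamp01 y <= 1)%R.
Proof. unfold clamp01, Rmax, Rmin. repeat destruct Rle_dec; lra. Qed.

Lemma clamp01_id y : (0 <= y <= 1)%R -> clamp01 y = y.
Proof. intros H. unfold clamp01, Rmax, Rmin. repeat destruct Rle_dec; lra. Qed.

Lemma is_RInt_sum_n (h : nat -> R -> C) N :
  (forall k, @ex_RInt C_R_NormedModule (h k) 0 1) ->
  @is_RInt C_R_NormedModule (fun y => @sum_n C_AbelianMonoid (fun k => h k y) N) 0 1
    (@sum_n C_AbelianMonoid (fun k => RInt01 (h k)) N).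
Proof.
  intros Hex. induction N as [|N IH].
  - rewrite sum_O. eapply is_RInt_ext, (@RInt_correct C_R_CompleteNormedModule), Hex.
    intros y _. now rewrite sum_O.
  - rewrite sum_Sn. eapply is_RInt_ext, (@is_RInt_plus C_R_NormedModule); [| exact IH |].
    + intros y _. now rewrite sum_Sn.
    + apply (@RInt_correct C_R_CompleteNormedModule), Hex.
Qed.

(* Uniform convergence is taken on all of R, so the summands are first extended by clamping. *)
Lemma is_series_RInt (h : nat -> R -> C) (H : R -> C) (M : nat -> R) :
  (forall k, @ex_RInt C_R_NormedModule (h k) 0 1) ->
  (forall k y, (0 <= y <= 1)%R -> (Cmod (h k y) <= M k)%R) -> ex_series M ->
  (forall y, (0 <= y <= 1)%R -> is_series (fun k => h k y) (H y)) ->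
  is_series (fun k => RInt01 (h k)) (RInt01 H).
Proof.
  intros Hex HM HMs HH.
  destruct (@filterlim_RInt nat C_R_CompleteNormedModule
              (fun N y => @sum_n C_AbelianMonoid (fun k => h k (clamp01 y)) N) 0 1 eventually _
              (fun y => H (clamp01 y)) (@sum_n C_AbelianMonoid (fun k => RInt01 (h k))))
    as [If [HIf HI]].
  - intros N. eapply is_RInt_ext, is_RInt_sum_n, Hex.
    intros y Hy. now rewrite clamp01_id by (apply Rmin_Rmax_01, Hy).
  - apply (uniform_cvg_series _ _ M); [|exact HMs|].
    + intros k y. apply HM, clamp01_in.
    + intros y. apply HH, clamp01_in.
  - replace (RInt01 H) with If; [exact HIf|].
    symmetry. apply (@is_RInt_unique C_R_CompleteNormedModule).
    eapply is_RInt_ext, HI. intros y Hy. cbv beta.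
    now rewrite clamp01_id by (apply Rmin_Rmax_01, Hy).
Qed.

Lemma is_series_iint n : forall (f : nat -> (nat -> R) -> C) (M : nat -> R) (F : (nat -> R) -> C),
  (forall k, ex_iint n (f k)) -> (forall k x, in_unit_cube x -> (Cmod (f k x) <= M k)%R) ->
  ex_series M -> (forall x, in_unit_cube x -> is_series (fun k => f k x) (F x)) ->
  is_series (fun k => iint n (f k)) (iint n F).
Proof.
  induction n as [|n IH]; intros f M F Hf HM HMs HF.
  - apply HF. intros l. lra.
  - apply (IH _ M); [intros k; apply (Hf k)| |exact HMs|].
    + intros k x Hx. rewrite <- norm_C_R.
      replace (M k) with ((1 - 0) * M k)%R by ring.
      apply (@norm_RInt_le_const C_R_NormedModule (fun y => f k (upd x (S n) y))); [lra| |].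
      * intros y Hy. rewrite norm_C_R. apply HM, in_unit_cube_upd; assumption.
      * apply (@RInt_correct C_R_CompleteNormedModule), (Hf k), Hx.
    + intros x Hx. apply (is_series_RInt (fun k y => f k (upd x (S n) y)) _ M); [| |exact HMs|].
      * intros k. apply (Hf k), Hx.
      * intros k y Hy. apply HM, in_unit_cube_upd; assumption.
      * intros y Hy. apply HF, in_unit_cube_upd; assumption.
Qed.

(** * Generating functions *)

Lemma is_series_single {K : AbsRing} {V : NormedModule K} (a : nat -> V) :
  (forall n, a (S n) = zero) -> is_series a (a 0%nat).
Proof.
  intros H. unfold is_series. eapply filterlim_ext; [|apply filterlim_const].
  intros N. induction N as [|N IH]; [now rewrite sum_O|].
  now rewrite sum_Sn, <- IH, H, plus_zero_r.
Qed.

Lemma ex_series_of_Cmod (a : nat -> C) : ex_series (fun n => Cmod (a n)) -> ex_series a.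
Proof.
  apply (@ex_series_le C_AbsRing C_CompleteNormedModule a (fun n => Cmod (a n))).
  intros n. apply Rle_refl.
Qed.

Lemma ex_series_Cmod_scal (c : C) (a : nat -> C) :
  ex_series (fun n => Cmod (a n)) -> ex_series (fun n => Cmod (c * a n)).
Proof.
  intros H. eapply ex_series_ext; [|exact (@ex_series_scal R_AbsRing R_NormedModule (Cmod c) _ H)].
  intros n. cbv beta. rewrite Cmod_mult. reflexivity.
Qed.

Lemma one_minus_neq_0 (u : C) : (Cmod u < 1)%R -> 1 - u <> 0.
Proof.
  intros Hu H.
  replace u with (RtoC 1) in Hu by (replace u with (1 - (1 - u)) by ring; rewrite H; ring).
  rewrite Cmod_1 in Hu. lra.
Qed.

Lemma ex_series_Cmod_partial_sums (u : C) (b : nat -> C) : (Cmod u < 1)%R ->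
  ex_series (fun n => Cmod (u ^ n * b (S n))) ->
  ex_series (fun n => Cmod (u ^ n * csum 1 (S n) b)).
Proof.
  intros Hu [Sa HSa].
  (* Dominated by the Cauchy product of the two absolutely convergent series. *)
  assert (Hg : is_series (fun m => Cmod u ^ m)%R (/ (1 - Cmod u))%R).
  { apply is_series_geom. rewrite Rabs_right by apply Rle_ge, Cmod_ge_0. exact Hu. }
  pose proof (is_series_mult_pos _ _ _ _ HSa Hg (fun n => Cmod_ge_0 _)
                (fun n => pow_le _ n (Cmod_ge_0 u))) as Hm.
  apply (@ex_series_le R_AbsRing R_CompleteNormedModule _
    (fun n => sum_f_R0 (fun k => Cmod (u ^ k * b (S k)) * Cmod u ^ (n - k))%R n));
    [|eexists; exact Hm].
  intros n. cbv beta. unfold norm; simpl; unfold abs; simpl.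
  rewrite Rabs_right by apply Rle_ge, Cmod_ge_0.
  rewrite Cmod_mult, Cmod_pow.
  eapply Rle_trans;
    [apply Rmult_le_compat_l; [apply pow_le, Cmod_ge_0|apply Cmod_csum_le_sum_f_R0]|].
  rewrite scal_sum. right. apply sum_eq. intros k Hk.
  rewrite Cmod_mult, Cmod_pow, Nat.add_1_l.
  replace n with (k + (n - k))%nat at 1 by lia. rewrite pow_add. ring.
Qed.

Lemma is_series_partial_sums (u : C) (b : nat -> C) (beta : C) : (Cmod u < 1)%R ->
  is_series (fun n => u ^ n * b (S n)) beta -> ex_series (fun n => Cmod (u ^ n * b (S n))) ->
  is_series (fun n => u ^ n * csum 1 (S n) b) (beta / (1 - u)).
Proof.
  intros Hu Hb Hab.
  destruct (ex_series_of_Cmod _ (ex_series_Cmod_partial_sums u b Hu Hab)) as [sig Hsig].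
  change C in sig.
  set (g := fun n => u ^ n * csum 1 (S n) b) in *.
  set (g_shift := fun n => match n with O => RtoC 0 | S n' => g n' end).
  assert (Hshift : is_series g_shift sig).
  { apply is_series_decr_1.
    match goal with |- is_series _ ?q => replace q with sig; [exact Hsig|] end.
    unfold plus, opp; simpl. ring. }
  (* (1 - u) * sig = beta, because g n - u * g (n - 1) = u ^ n * b (n + 1). *)
  assert (Hdiff : is_series (fun n => u ^ n * b (S n)) (sig - u * sig)).
  { eapply is_series_ext;
      [|exact (is_series_minus _ _ _ _ Hsig
                 (@is_series_scal C_AbsRing C_NormedModule u _ _ Hshift))].
    intros n. unfold plus, opp, scal, g_shift, g; simpl. unfold mult; simpl. destruct n as [|n].
    - rewrite csum_Sl, csum_0. ring.
    - rewrite (csum_Sr 1 (S n)), Cpow_S. simpl Nat.add. ring. }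
  rewrite (is_series_C_unique _ _ _ Hb Hdiff).
  replace (_ / (1 - u)) with sig; [exact Hsig|]. field. now apply one_minus_neq_0.
Qed.

Definition poch_conv (t : nat) (a : nat -> C) (K : nat) : C :=
  csum 1 K (fun K' => RtoC (INR (poch (K - K' + 1) t)) * a K').

Lemma poch_conv_S t a K :
  poch_conv (S t) a K = csum 1 K (fun K' => RtoC (INR (S t)) * poch_conv t a K').
Proof.
  induction K as [|K IH]; [reflexivity|].
  rewrite (csum_Sr 1 K), <- IH. unfold poch_conv. simpl (1 + K)%nat.
  rewrite !(csum_Sr 1 K).
  rewrite (csum_ext K 1 _ (fun K' => RtoC (INR (poch (K - K' + 1) (S t))) * a K'
      + RtoC (INR (S t)) * (RtoC (INR (poch (S K - K' + 1) t)) * a K'))).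
  - rewrite csum_plus, csum_scal. replace (S K - (1 + K) + 1)%nat with 1%nat by lia.
    change (poch 1 (S t)) with (poch 1 t * (1 + t))%nat.
    rewrite mult_INR, RtoC_mult. change (INR (1 + t)) with (INR (S t)). ring.
  - intros i Hi. replace (S K - i + 1)%nat with (S (K - i + 1)) by lia.
    rewrite poch_pascal, plus_INR, mult_INR, RtoC_plus, RtoC_mult. ring.
Qed.

Lemma is_series_poch_conv t : forall (u : C) (a : nat -> C) (alpha : C), (Cmod u < 1)%R ->
  is_series (fun n => u ^ n * a (S n)) alpha -> ex_series (fun n => Cmod (u ^ n * a (S n))) ->
  is_series (fun n => u ^ n * poch_conv t a (S n)) (RtoC (INR (fact t)) * alpha / (1 - u) ^ S t) /\
  ex_series (fun n => Cmod (u ^ n * poch_conv t a (S n))).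
Proof.
  induction t as [|t IH]; intros u a alpha Hu Ha Hab.
  - assert (E : forall n, poch_conv 0 a (S n) = csum 1 (S n) a).
    { intros n. apply csum_ext. intros i _. simpl. ring. }
    split.
    + apply (is_series_ext (fun n => u ^ n * csum 1 (S n) a)); [intros n; now rewrite E|].
      replace (_ / (1 - u) ^ 1) with (alpha / (1 - u)) by (simpl; field; now apply one_minus_neq_0).
      now apply is_series_partial_sums.
    + apply (ex_series_ext (fun n => Cmod (u ^ n * csum 1 (S n) a))); [intros n; now rewrite E|].
      now apply ex_series_Cmod_partial_sums.
  - destruct (IH u a alpha Hu Ha Hab) as [H1 H2].
    set (b := fun K => RtoC (INR (S t)) * poch_conv t a K).
    assert (B1 : is_series (fun n => u ^ n * b (S n))
                   (RtoC (INR (S t)) * (RtoC (INR (fact t)) * alpha / (1 - u) ^ S t))).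
    { eapply is_series_ext;
        [|exact (@is_series_scal C_AbsRing C_NormedModule (RtoC (INR (S t))) _ _ H1)].
      intros n. unfold b, scal; simpl. unfold mult; simpl. ring. }
    assert (B2 : ex_series (fun n => Cmod (u ^ n * b (S n)))).
    { eapply ex_series_ext; [|exact (ex_series_Cmod_scal (RtoC (INR (S t))) _ H2)].
      intros n. unfold b. f_equal. ring. }
    split.
    + apply (is_series_ext (fun n => u ^ n * csum 1 (S n) b)); [intros n; now rewrite poch_conv_S|].
      replace (_ / (1 - u) ^ S (S t))
        with (RtoC (INR (S t)) * (RtoC (INR (fact t)) * alpha / (1 - u) ^ S t) / (1 - u)).
      * now apply is_series_partial_sums.
      * change (fact (S t)) with (S t * fact t)%nat. rewrite mult_INR, RtoC_mult, (Cpow_S _ (S t)).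
        field. split; [apply Cpow_nz|]; now apply one_minus_neq_0.
    + apply (ex_series_ext (fun n => Cmod (u ^ n * csum 1 (S n) b)));
        [intros n; now rewrite poch_conv_S|].
      now apply ex_series_Cmod_partial_sums.
Qed.

Definition delta1 (K : nat) : C := if Nat.eqb K 1 then 1 else 0.

Lemma poch_conv_delta1 t K : (1 <= K)%nat -> poch_conv t delta1 K = RtoC (INR (poch (K - 1 + 1) t)).
Proof.
  intros HK. destruct K as [|K]; [lia|]. unfold poch_conv. rewrite csum_Sl.
  rewrite (csum_ext K 2 _ (fun _ => 0)), <- (Cmult_0_l 0), csum_scal.
  - unfold delta1. simpl. ring.
  - intros i Hi. unfold delta1. destruct (Nat.eqb_spec i 1); [lia|ring].
Qed.

Lemma is_series_delta1 (u : C) :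
  is_series (fun n => u ^ n * delta1 (S n)) (RtoC 1) /\
  ex_series (fun n => Cmod (u ^ n * delta1 (S n))).
Proof.
  split.
  - replace (RtoC 1) with (u ^ 0 * delta1 1) by (unfold delta1; simpl; ring_at C).
    apply is_series_single. intros n. unfold delta1. simpl. now rewrite Cmult_0_r.
  - eexists. apply is_series_single. intros n. unfold delta1. simpl.
    rewrite Cmult_0_r. apply Cmod_0.
Qed.

Lemma Cmod_poch_conv_le t (a b : nat -> C) K : (forall K', (Cmod (a K') <= Re (b K'))%R) ->
  (Cmod (poch_conv t a K) <= Re (poch_conv t b K))%R.
Proof.
  intros H. apply Cmod_csum_le_Re. intros i.
  rewrite Cmod_mult, Cmod_R, re_scal_l, Rabs_right by apply Rle_ge, pos_INR.
  apply Rmult_le_compat_l; [apply pos_INR|apply H].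
Qed.

Lemma is_series_poch_conv_geom t (c x w : C) (a : nat -> C) (alpha : C) : (Cmod (w * x) < 1)%R ->
  is_series (fun n => (w * x) ^ n * a (S n)) alpha /\
  ex_series (fun n => Cmod ((w * x) ^ n * a (S n))) ->
  is_series (fun n => w ^ n * (c * x ^ (S n - 1) * poch_conv t a (S n)))
    (RtoC (INR (fact t)) * c / (1 - w * x) ^ S t * alpha) /\
  ex_series (fun n => Cmod (w ^ n * (c * x ^ (S n - 1) * poch_conv t a (S n)))).
Proof.
  intros Hu [Ha Hab]. destruct (is_series_poch_conv t _ _ _ Hu Ha Hab) as [H1 H2].
  assert (E : forall n, w ^ n * (c * x ^ (S n - 1) * poch_conv t a (S n)) =
                        c * ((w * x) ^ n * poch_conv t a (S n))).
  { intros n. rewrite Cpow_mult_l, Nat.sub_1_r. simpl pred. ring. }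
  split.
  - apply (is_series_ext _ _ _ (fun n => eq_sym (E n))).
    replace (_ * alpha) with (c * (RtoC (INR (fact t)) * alpha / (1 - w * x) ^ S t))
      by (field; apply Cpow_nz, one_minus_neq_0, Hu).
    exact (@is_series_scal C_AbsRing C_NormedModule c _ _ H1).
  - apply (ex_series_ext _ _ (fun n => f_equal Cmod (eq_sym (E n)))).
    now apply ex_series_Cmod_scal.
Qed.

(* [gen_coef t B X m j K] is the coefficient of [w ^ (K - 1)] in [gen_fun t B X w m j]. *)
Fixpoint gen_coef (t : nat -> nat) (B X : nat -> C) (m j K : nat) : C :=
  B j * X j ^ (K - 1) *
  poch_conv (t j) (match m with O => delta1 | S m' => gen_coef t B X m' (S j) end) K.

Fixpoint gen_fun (t : nat -> nat) (B X : nat -> C) (w : C) (m j : nat) : C :=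
  RtoC (INR (fact (t j))) * B j / (1 - w * X j) ^ S (t j) *
  match m with O => 1 | S m' => gen_fun t B X (w * X j) m' (S j) end.

Lemma is_series_gen_coef t B X m : (forall i, (Cmod (X i) <= 1)%R) -> forall j w, (Cmod w < 1)%R ->
  is_series (fun n => w ^ n * gen_coef t B X m j (S n)) (gen_fun t B X w m j) /\
  ex_series (fun n => Cmod (w ^ n * gen_coef t B X m j (S n))).
Proof.
  intros HX. induction m as [|m IH]; intros j w Hw;
    (assert (Hu : (Cmod (w * X j) < 1)%R) by
      (rewrite Cmod_mult; pose proof (HX j); pose proof (Cmod_ge_0 w); nra));
    apply (is_series_poch_conv_geom _ _ _ _ _ _ Hu).
  - apply is_series_delta1.
  - apply IH, Hu.
Qed.

Lemma Cmod_gen_coef_le t B X m :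
  (forall i, (Cmod (B i) <= 1)%R) -> (forall i, (Cmod (X i) <= 1)%R) -> forall j K,
  (Cmod (gen_coef t B X m j K) <= Re (gen_coef t (fun _ => 1) (fun _ => 1) m j K))%R.
Proof.
  intros HB HX.
  assert (HBX : forall j K, (Cmod (B j * X j ^ (K - 1)) <= 1)%R).
  { intros j K. apply Cmod_mult_le; [apply HB|]. rewrite Cmod_pow.
    apply pow_le_1. split; [apply Cmod_ge_0|apply HX]. }
  induction m as [|m IH]; intros j K; simpl gen_coef; rewrite Cpow_1_l, !Cmult_1_l;
    apply Cmod_mult_le, Cmod_poch_conv_le; try apply HBX.
  - intros K'. unfold delta1. destruct (Nat.eqb K' 1); simpl; rewrite ?Cmod_1, ?Cmod_0; lra.
  - apply IH.
Qed.

(** * Integrating the coefficients *)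

Definition block_weight (d r s : nat -> nat) (x : nat -> R) (j : nat) : C :=
  cprod (S (d (j - 1)%nat)) (d j - d (j - 1))%nat
    (fun l => Cpow (RtoC (x l)) (r j) * Cpow (RtoC (1 - x l)%R) (s j)).

Definition block_prod (d : nat -> nat) (x : nat -> R) (j : nat) : C :=
  cprod (S (d (j - 1)%nat)) (d j - d (j - 1))%nat (fun l => RtoC (x l)).

Definition beta_value (r s : nat -> nat) (j K : nat) : C :=
  RtoC (INR (fact (s j)) / INR (poch (S (K - 1 + r j)) (S (s j))))%R.

Lemma separable_block (d r s : nat -> nat) j K G I : (d (j - 1)%nat <= d j)%nat ->
  separable (d (j - 1)%nat) G I ->
  separable (d j) (fun x => G x * (block_weight d r s x j * block_prod d x j ^ (K - 1)))
    (I * beta_value r s j K ^ (d j - d (j - 1))%nat).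
Proof.
  intros Hle (c & phi & Iv & HI & HG & ->).
  set (a := d (j - 1)%nat) in *.
  set (kernel := fun y => RtoC (y ^ (K - 1 + r j) * (1 - y) ^ s j)%R).
  assert (Hd : d j = (a + (d j - a))%nat) by lia.
  exists c, (fun l => if Nat.ltb l (1 + a) then phi l else kernel),
    (fun l => if Nat.ltb l (1 + a) then Iv l else beta_value r s j K).
  split; [|split].
  - intros l Hl. destruct (Nat.ltb_spec l (1 + a)); [apply HI; lia|].
    apply is_RInt_RtoC, is_RInt_beta.
  - intros x. rewrite HG, <- Cmult_assoc.
    rewrite (cprod_ext (d j) 1 _ (fun l => if Nat.ltb l (1 + a) then phi l (x l) else kernel (x l)))
      by (intros; now destruct Nat.ltb).
    rewrite Hd at 1. rewrite cprod_split. do 2 f_equal.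
    unfold block_weight, block_prod. fold a.
    rewrite <- cprod_pow, <- cprod_mult. apply cprod_ext. intros i _. unfold kernel.
    rewrite RtoC_mult, <- !RtoC_pow, pow_add, RtoC_mult. ring.
  - rewrite <- (cprod_const _ (1 + a)), <- Cmult_assoc, <- cprod_split, <- Hd. reflexivity.
Qed.

Lemma beta_value_sfactor (d r s t : nat -> nat) j K K' : (1 <= K)%nat ->
  RtoC (INR (poch (K - K' + 1) (t j))) * beta_value r s j K ^ (d j - d (j - 1))%nat =
  RtoC (INR (fact (s j))) ^ (d j - d (j - 1))%nat * sfactor d r s t j K K'.
Proof.
  intros HK. unfold beta_value, sfactor.
  replace (S (K - 1 + r j)) with (K + r j)%nat by lia.
  pose proof (RtoC_INR_neq_0 _ (poch_pos (S (s j)) (K + r j) ltac:(lia))) as Hp.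
  rewrite RtoC_div by (intros E; apply Hp; now rewrite E).
  unfold Cdiv. rewrite Cpow_mult_l, Cpow_inv by exact Hp. ring.
Qed.

Section IntegrateCoefficients.

Variables (p : nat) (d r s t : nat -> nat).
Hypothesis d_incr : forall j, (1 <= j <= p)%nat -> (d (j - 1)%nat < d j)%nat.

Lemma is_iint_gen_coef m : forall j K G I,
  (j + m = p)%nat -> (1 <= j)%nat -> (1 <= K)%nat -> separable (d (j - 1)%nat) G I ->
  is_iint (d p) (fun x => G x * gen_coef t (block_weight d r s x) (block_prod d x) m j K)
    (I * cprod j (S m) (fun i => RtoC (INR (fact (s i))) ^ (d i - d (i - 1))%nat)
       * tail_sum d r s t m j K).
Proof.
  induction m as [|m IH]; intros j K G I Hjm Hj HK HG;
    pose proof (separable_block d r s j K G I (Nat.lt_le_incl _ _ (d_incr j ltac:(lia))) HG)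
      as Hblock;
    simpl gen_coef.
  - rewrite Nat.add_0_r in Hjm. subst p.
    rewrite poch_conv_delta1 by exact HK.
    replace (_ * tail_sum d r s t 0 j K)
      with (RtoC (INR (poch (K - 1 + 1) (t j))) * (I * beta_value r s j K ^ (d j - d (j - 1))%nat)).
    + eapply is_iint_ext, is_iint_separable, separable_scal, Hblock. intros x _. cbv beta. ring.
    + simpl tail_sum. rewrite cprod_Sl, cprod_0, Cmult_1_r, <- Cmult_assoc.
      rewrite <- beta_value_sfactor by exact HK. ring.
  - set (G' := fun x => G x * (block_weight d r s x j * block_prod d x j ^ (K - 1))) in Hblock.
    set (I' := I * beta_value r s j K ^ (d j - d (j - 1))%nat) in Hblock.
    set (P := cprod (S j) (S m) (fun i => RtoC (INR (fact (s i))) ^ (d i - d (i - 1))%nat)).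
    set (c := fun K' => RtoC (INR (poch (K - K' + 1) (t j)))).
    replace (_ * tail_sum d r s t (S m) j K)
      with (csum 1 K (fun K' => c K' * I' * P * tail_sum d r s t m (S j) K')).
    + apply (is_iint_ext _ (fun x => csum 1 K (fun K' =>
               c K' * G' x * gen_coef t (block_weight d r s x) (block_prod d x) m (S j) K'))).
      * intros x _. unfold poch_conv, G'. symmetry. rewrite Cmult_assoc, <- csum_scal.
        apply csum_ext. intros i _. unfold c. ring.
      * apply is_iint_csum. intros k Hk. apply IH; [lia|lia|lia|].
        rewrite Nat.sub_succ, Nat.sub_0_r. now apply separable_scal.
    + symmetry. simpl tail_sum. rewrite cprod_Sl. fold P. rewrite <- Cmult_assoc, <- !csum_scal.
      apply csum_ext. intros i _. unfold c, I'.
      transitivity (I * P * (RtoC (INR (fact (s j))) ^ (d j - d (j - 1))%nat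
                             * sfactor d r s t j K i) * tail_sum d r s t m (S j) i); [ring|].
      rewrite <- beta_value_sfactor by exact HK. ring.
Qed.

End IntegrateCoefficients.

(** * Expansion of the integrand *)

Lemma Cmod_block_weight_le_1 d r s x j : in_unit_cube x -> (Cmod (block_weight d r s x j) <= 1)%R.
Proof.
  intros Hx. apply Cmod_cprod_le_1. intros l. specialize (Hx l).
  apply Cmod_mult_le; rewrite Cmod_pow, Cmod_R, Rabs_right by lra; apply pow_le_1; lra.
Qed.

Lemma Cmod_block_prod_le_1 d x j : in_unit_cube x -> (Cmod (block_prod d x j) <= 1)%R.
Proof.
  intros Hx. apply Cmod_cprod_le_1. intros l. specialize (Hx l).
  rewrite Cmod_R, Rabs_right by lra. lra.
Qed.

Lemma cprod_block_prod (d : nat -> nat) x i : d 0%nat = 0%nat ->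
  (forall j, (1 <= j <= i)%nat -> (d (j - 1)%nat <= d j)%nat) ->
  cprod 1 i (block_prod d x) = xprod x (d i).
Proof.
  intros Hd0 Hd. induction i as [|i IH].
  - unfold xprod. now rewrite Hd0.
  - rewrite cprod_Sr, IH by (intros; apply Hd; lia).
    specialize (Hd (S i) ltac:(lia)). simpl (S i - 1)%nat in Hd. rewrite Nat.sub_0_r in Hd.
    unfold xprod, block_prod. simpl (1 + i)%nat. simpl (S i - 1)%nat. rewrite Nat.sub_0_r.
    replace (d (S i)) with (d i + (d (S i) - d i))%nat at 2 by lia.
    rewrite cprod_add. reflexivity.
Qed.

Lemma cprod_Sr_pred (X : nat -> C) j : (1 <= j)%nat -> cprod 1 (j - 1) X * X j = cprod 1 j X.
Proof. intros Hj. destruct j as [|j]; [lia|]. now rewrite cprod_Sr, Nat.sub_succ, Nat.sub_0_r. Qed.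

Lemma gen_fun_cprod t B X m : forall j w, (1 <= j)%nat ->
  gen_fun t B X (w * cprod 1 (j - 1) X) m j =
  cprod j (S m) (fun i => RtoC (INR (fact (t i))) * B i / (1 - w * cprod 1 i X) ^ S (t i)).
Proof.
  induction m as [|m IH]; intros j w Hj; simpl gen_fun;
    rewrite cprod_Sl, <- Cmult_assoc, cprod_Sr_pred by exact Hj.
  - now rewrite cprod_0.
  - rewrite <- IH by lia. simpl (S j - 1)%nat. rewrite Nat.sub_0_r. reflexivity.
Qed.

Lemma Cdiv_pow_sub (B P z : C) k : z <> 0 -> 1 - / z * P <> 0 ->
  B / (z - P) ^ k = (/ z) ^ k * (B / (1 - / z * P) ^ k).
Proof.
  intros Hz HP. replace (z - P) with (z * (1 - / z * P)) by (field; exact Hz).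
  rewrite Cpow_mult_l, Cpow_inv by exact Hz. field. split; now apply Cpow_nz.
Qed.

Section Expansion.

Variables (p : nat) (d r s t : nat -> nat) (z : C).
Hypotheses (p_pos : (1 <= p)%nat) (d_0 : d 0%nat = 0%nat)
  (d_incr : forall j, (1 <= j <= p)%nat -> (d (j - 1)%nat < d j)%nat) (z_gt_1 : (1 < Cmod z)%R).

Definition expansion_scale : C :=
  (/ z) ^ (fold_right Nat.add 0%nat (map t (seq 1 p)) + p)
  * cprod 1 p (fun j => / RtoC (INR (fact (t j)))).

Definition expansion_term (n : nat) (x : nat -> R) : C :=
  expansion_scale
  * ((/ z) ^ n * gen_coef t (block_weight d r s x) (block_prod d x) (p - 1) 1 (S n)).

Lemma integrand_gen_fun x : in_unit_cube x ->
  integrand p d r s t z x =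
  expansion_scale * gen_fun t (block_weight d r s x) (block_prod d x) (/ z) (p - 1) 1.
Proof.
  intros Hx. pose proof (Cmod_inv_lt_1 z z_gt_1) as Hw.
  pose proof (gen_fun_cprod t (block_weight d r s x) (block_prod d x) (p - 1) 1 (/ z) (le_n 1))
    as Hgen.
  rewrite cprod_0, Cmult_1_r in Hgen. replace (S (p - 1)) with p in Hgen by lia.
  unfold expansion_scale.
  rewrite Hgen, <- (cprod_pow_S (/ z) t p 1), <- Cmult_assoc, <- !cprod_mult.
  unfold integrand. apply cprod_ext. intros j Hj. fold (block_weight d r s x j).
  rewrite <- (cprod_block_prod d x j)
    by (try assumption; intros; apply Nat.lt_le_incl, d_incr; lia).
  assert (HP : 1 - / z * cprod 1 j (block_prod d x) <> 0).
  { apply one_minus_neq_0. rewrite Cmod_mult.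
    pose proof (Cmod_cprod_le_1 j 1 (block_prod d x) (fun i => Cmod_block_prod_le_1 d x i Hx)).
    pose proof (Cmod_ge_0 (/ z)). nra. }
  rewrite Cdiv_pow_sub by (assumption || now apply neq_0_of_Cmod_gt_1). field.
  split; [now apply Cpow_nz|apply RtoC_INR_neq_0, lt_O_fact].
Qed.

Lemma is_series_expansion_term x : in_unit_cube x ->
  is_series (fun n => expansion_term n x) (integrand p d r s t z x).
Proof.
  intros Hx. rewrite integrand_gen_fun by exact Hx.
  apply (@is_series_scal C_AbsRing C_NormedModule).
  apply is_series_gen_coef; [|now apply Cmod_inv_lt_1].
  intros i. now apply Cmod_block_prod_le_1.
Qed.

Lemma expansion_term_dominated : exists M : nat -> R, ex_series M /\
  forall n x, in_unit_cube x -> (Cmod (expansion_term n x) <= M n)%R.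
Proof.
  set (u := RtoC (Cmod (/ z))).
  exists (fun n => Cmod expansion_scale
                   * Cmod (u ^ n * gen_coef t (fun _ => 1) (fun _ => 1) (p - 1) 1 (S n)))%R.
  assert (Hu : Cmod u = Cmod (/ z))
    by (unfold u; rewrite Cmod_R; apply Rabs_right, Rle_ge, Cmod_ge_0).
  split.
  - destruct (is_series_gen_coef t (fun _ => 1) (fun _ => 1) (p - 1)) with (j := 1%nat) (w := u)
      as [_ H]; [intros; rewrite Cmod_1; lra|rewrite Hu; now apply Cmod_inv_lt_1|].
    exact (@ex_series_scal R_AbsRing R_NormedModule (Cmod expansion_scale) _ H).
  - intros n x Hx. unfold expansion_term. rewrite !Cmod_mult, !Cmod_pow, Hu.
    apply Rmult_le_compat_l; [apply Cmod_ge_0|].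
    apply Rmult_le_compat_l; [apply pow_le, Cmod_ge_0|].
    eapply Rle_trans; [|apply re_le_Cmod]. eapply Rle_trans; [|apply Rle_abs].
    apply Cmod_gen_coef_le; intros i;
      [now apply Cmod_block_weight_le_1|now apply Cmod_block_prod_le_1].
Qed.

Lemma is_iint_expansion_term n : is_iint (d p) (expansion_term n)
  (/ Cpow z (fold_right Nat.add 0%nat (map t (seq 1 p)) + p - 1)
   * cprod 1 p (fun j => Cpow (RtoC (INR (fact (s j)))) (d j - d (j - 1))%nat
                         / RtoC (INR (fact (t j))))
   * series_term p d r s t z n).
Proof.
  set (T := fold_right Nat.add 0%nat (map t (seq 1 p))).
  set (c := expansion_scale).
  assert (Hsep : separable (d (1 - 1)%nat) (fun _ => c * (/ z) ^ n) (c * (/ z) ^ n))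
    by (simpl; rewrite d_0; apply separable_const).
  pose proof (is_iint_gen_coef p d r s t d_incr (p - 1) 1 (S n) _ _
                ltac:(lia) (le_n 1) ltac:(lia) Hsep) as H.
  replace (S (p - 1)) with p in H by lia.
  replace (/ z ^ _ * _ * series_term p d r s t z n) with (c * (/ z) ^ n
    * cprod 1 p (fun i => RtoC (INR (fact (s i))) ^ (d i - d (i - 1))%nat)
    * tail_sum d r s t (p - 1) 1 (S n)).
  - eapply is_iint_ext, H. intros x _. unfold expansion_term. fold c. ring.
  - symmetry. unfold series_term, c, expansion_scale, Cdiv. fold T.
    rewrite cprod_mult, <- !Cpow_inv by now apply neq_0_of_Cmod_gt_1.
    replace (T + p)%nat with (S (T + p - 1)) by lia. simpl. rewrite Nat.sub_0_r. ring.
Qed.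

End Expansion.

Theorem proposition1 (D p : nat) (r s t d : nat -> nat) (z : C) :
  (1 <= D)%nat -> (1 <= p)%nat ->
  d 0%nat = 0%nat ->
  (forall j, (1 <= j <= p)%nat -> (d (j - 1)%nat < d j)%nat) ->
  d p = D ->
  (1 < Cmod z)%R ->
  exists S : C,
    is_series (series_term p d r s t z) S /\
    iint D (integrand p d r s t z) =
      / Cpow z (fold_right Nat.add 0%nat (map t (seq 1 p)) + p - 1)
      * cprod 1 p (fun j => Cpow (RtoC (INR (fact (s j)))) (d j - d (j - 1))%nat
                            / RtoC (INR (fact (t j))))
      * S.
Proof.
  intros _ Hp Hd0 Hd <- Hz.
  set (Kc := / Cpow z (fold_right Nat.add 0%nat (map t (seq 1 p)) + p - 1)
      * cprod 1 p (fun j => Cpow (RtoC (INR (fact (s j)))) (d j - d (j - 1))%nat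
                            / RtoC (INR (fact (t j))))).
  assert (HKc : Kc <> 0).
  { apply Cmult_neq_0; [apply Cinv_neq_0, Cpow_nz, neq_0_of_Cmod_gt_1, Hz|].
    apply cprod_neq_0. intros j _. apply Cmult_neq_0; [apply Cpow_nz|apply Cinv_neq_0];
      apply RtoC_INR_neq_0, lt_O_fact. }
  pose proof (is_iint_expansion_term p d r s t z Hp Hd0 Hd Hz) as Hterm.
  destruct (expansion_term_dominated p d r s t z Hz) as (M & HMs & HM).
  pose proof (is_series_iint (d p) (expansion_term p d r s t z) M (integrand p d r s t z)
                (fun n => proj1 (Hterm n)) HM HMs
                (is_series_expansion_term p d r s t z Hp Hd0 Hd Hz)) as Hser.
  exists (/ Kc * iint (d p) (integrand p d r s t z)). split.
  - eapply is_series_ext; [|exact (@is_series_scal C_AbsRing C_NormedModule (/ Kc) _ _ Hser)].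
    intros n. unfold scal; simpl. unfold mult; simpl. rewrite (proj2 (Hterm n)). fold Kc.
    field. exact HKc.
  - fold Kc. field. exact HKc.
Qed.
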